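(* Consider the linear advection equation $\partial_t u+\partial_x(\lambda u)=0$ with constant $\lambda>0$ on a uniform grid of $\mathbb{R}$ with cells $T^{(i)}=[x_{i-1/2},x_{i+1/2}]$, $x_{i+1/2}=(i+\tfrac12)h$, $h>0$. Let $N\le M$ be integers, let $\mathcal{V}_h$ be the space of functions that are polynomials of degree at most $N$ on each cell, and let $t\mapsto u_h(\cdot,t)\in\mathcal{V}_h$ be differentiable in $t$. Let $w_h(\cdot,t)$ be piecewise polynomial of degree at most $M$ on each cell, satisfying $\int_{T^{(i)}}\varphi\, w_h\,dx=\int_{T^{(i)}}\varphi\, u_h\,dx$ for all cells $T^{(i)}$ and all $\varphi\in\mathcal{V}_h$. Denote one-sided limits at interfaces by $u^{\pm}_{i+1/2}$, $w^{\pm}_{i+1/2}$ (superscript $-$: limit from the left, $+$: from the right). Suppose $u_h$ satisfies the semi-discrete $P_NP_M$ scheme with the upwind flux $f^w_{i+1/2}=\lambda w^-_{i+1/2}$: $$\int_{T^{(i)}}\partial_t u_h\,\varphi\,dx+f^w_{i+1/2}\varphi^-_{i+1/2}-f^w_{i-1/2}\varphi^+_{i-1/2}-\int_{T^{(i)}}\lambda w_h\,\varphi'\,dx=0\quad\text{for all }\varphi\in\mathcal{V}_h\text{ and all } i.$$ Let $E^{(i)}(t)=\int_{T^{(i)}}\tfrac12 u_h(x,t)^2\,dx$, $g(u)=\lambda u^2/2$ and $\tilde F_{i+1/2}=f^w_{i+1/2}u^-_{i+1/2}-g(u^-_{i+1/2})$. If at the interface $x_{i-1/2}$ either (a) $u^-_{i-1/2}>u^+_{i-1/2}$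 and $w^-_{i-1/2}\ge \tfrac12\big(u^-_{i-1/2}+u^+_{i-1/2}\big)$, or (b) $u^-_{i-1/2}<u^+_{i-1/2}$ and $w^-_{i-1/2}\le \tfrac12\big(u^-_{i-1/2}+u^+_{i-1/2}\big)$, then the cell square-entropy inequality $$\frac{d}{dt}E^{(i)}+\tilde F_{i+1/2}-\tilde F_{i-1/2}\le 0$$ holds for the cell $T^{(i)}$.
   Context: $\tilde F_{i+1/2}$ is a numerical entropy flux consistent with the entropy flux $F(u)=f(u)u-g(u)$ of the square entropy $Q(u)=u^2/2$, where $g$ is a primitive of $f(u)=\lambda u$. The function $w_h$ is the high-order reconstruction of $u_h$ used in the $P_NP_M$ scheme; only the stated moment-preservation property of $w_h$ is assumed. *)

From HB Require Import structures.
From mathcomp Require Import all_boot all_order all_algebra.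
From mathcomp Require Import all_classical all_reals all_analysis.
Set Implicit Arguments. Unset Strict Implicit. Unset Printing Implicit Defensive.
Import Order.TTheory GRing.Theory Num.Theory.
Import numFieldNormedType.Exports.
Local Open Scope classical_set_scope.
Local Open Scope ring_scope.

Section Grid.
Variable R : realType.

Definition xhalf (h : R) (j : int) : R := (j%:~R + 1 / 2) * h.

Definition cell (h : R) (j : int) : set R :=
  `[xhalf h (j - 1), xhalf h j]%classic.

Definition cint (h : R) (j : int) (f : R -> R) : R :=
  \int[lebesgue_measure]_(x in cell h j) f x.

(* A piecewise-polynomial function of x (time t fixed) is represented by the
   family of its restrictions to the cells:  P j t : {poly R} is the
   polynomial equal to the function on T^(j). *)
Definition lim_minus (h : R) (P : int -> R -> {poly R}) (j : int) (t : R) : R :=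
  (P j t).[xhalf h j].
Definition lim_plus (h : R) (P : int -> R -> {poly R}) (j : int) (t : R) : R :=
  (P (j + 1) t).[xhalf h j].

Definition flux_w (lam h : R) (w : int -> R -> {poly R}) (j : int) (t : R) : R :=
  lam * lim_minus h w j t.

Definition g_prim (lam : R) (v : R) : R := lam * v ^+ 2 / 2.

Definition Ftilde (lam h : R) (u w : int -> R -> {poly R}) (j : int) (t : R) : R :=
  flux_w lam h w j t * lim_minus h u j t - g_prim lam (lim_minus h u j t).

Definition Ecell (h : R) (u : int -> R -> {poly R}) (j : int) (t : R) : R :=
  cint h j (fun x => (u j t).[x] ^+ 2 / 2).

End Grid.

(* Testing the scheme on the cell T^(i) with phi = u_h itself turns its first term into
   dE^(i)/dt. Because u_h' lies in V_h, moment preservation replaces w_h by u_h in the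
   volume term, which becomes lam (u^-_{i+1/2}^2 - u^+_{i-1/2}^2) / 2. What remains of
   dE^(i)/dt + F~_{i+1/2} - F~_{i-1/2} is
     lam (u^+_{i-1/2} - u^-_{i-1/2}) (w^-_{i-1/2} - (u^-_{i-1/2} + u^+_{i-1/2}) / 2),
   which is nonpositive under either condition (a) or (b). The time derivative of E^(i)
   is computed by expanding u_h in the Lagrange basis at the nodes 0, ..., N, whose
   coefficients are point values of u_h and hence differentiable in t. *)

From HB Require Import structures.
From mathcomp Require Import all_boot all_order all_algebra.
From mathcomp Require Import all_classical all_reals all_analysis.
From mathcomp Require Import ring lra.
Set Implicit Arguments. Unset Strict Implicit. Unset Printing Implicit Defensive.
Import Order.TTheory GRing.Theory Num.Theory.
Import numFieldNormedType.Exports.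
Local Open Scope classical_set_scope.
Local Open Scope ring_scope.

Section PolyIntegral.
Variables (R : realType) (a b : R).
Implicit Types p q : {poly R}.

Definition pint p : R := \int[lebesgue_measure]_(x in `[a, b]) p.[x].

Lemma pint_integrable p :
  lebesgue_measure.-integrable `[a, b] (EFin \o horner p).
Proof.
apply: continuous_compact_integrable; first exact: segment_compact.
by apply/continuous_subspaceT => x; exact: continuous_horner.
Qed.

Lemma pintD p q : pint (p + q) = pint p + pint q.
Proof.
rewrite /pint; under eq_Rintegral do rewrite hornerD.
by rewrite RintegralD //; exact: pint_integrable.
Qed.

Lemma pintZ c p : pint (c *: p) = c * pint p.
Proof.
rewrite /pint; under eq_Rintegral do rewrite hornerZ.
by rewrite RintegralZl //; exact: pint_integrable.
Qed.

Lemma pint0 : pint 0 = 0.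
Proof. by rewrite -(scale0r 0) pintZ mul0r. Qed.

Lemma pint_sum n (F : 'I_n -> {poly R}) : pint (\sum_(k < n) F k) = \sum_(k < n) pint (F k).
Proof. exact: (big_morph pint pintD pint0). Qed.

Lemma pint_mul_sumZ n (L : 'I_n -> {poly R}) (x y : 'I_n -> R) :
  pint ((\sum_k x k *: L k) * (\sum_l y l *: L l)) =
  \sum_k \sum_l x k * y l * pint (L k * L l).
Proof.
rewrite mulr_suml pint_sum; apply: eq_bigr => k _.
rewrite mulr_sumr pint_sum; apply: eq_bigr => l _.
by rewrite -scalerAl -scalerAr scalerA pintZ.
Qed.

Lemma pint_derivM_self p : a < b -> pint (p^`() * p) = (p.[b] ^+ 2 - p.[a] ^+ 2) / 2.
Proof.
move=> ab; rewrite /pint /Rintegral.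
rewrite (@continuous_FTC2 _ _ (horner (2^-1 *: (p * p))) _ _ ab); first by rewrite !hornerE /=; field.
- by apply: continuous_subspaceT; exact: continuous_horner.
- split; first by move=> x _; exact: derivable_horner.
  + by apply: cvg_at_right_filter; exact: continuous_horner.
  + by apply: cvg_at_left_filter; exact: continuous_horner.
- by move=> x _; rewrite -derivE derivZ derivM !hornerE; field.
Qed.

End PolyIntegral.

Section Derivatives.
Variable R : numFieldType.

Lemma is_derive_sumr n (f : 'I_n -> R -> R) (df : 'I_n -> R) (t : R) :
  (forall k, is_derive t 1 (f k) (df k)) ->
  is_derive t (1 : R) (fun r => \sum_(k < n) f k r) (\sum_(k < n) df k).
Proof. by move=> f_df; rewrite -fct_sumE; exact: is_derive_sum. Qed.

Lemma is_derive_mulr_cst (f : R -> R) (df c t : R) :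
  is_derive t 1 f df -> is_derive t (1 : R) (fun r => f r * c) (df * c).
Proof.
move=> f_df; have -> : (fun r => f r * c) = c \*: f by apply/funext => r /=; rewrite mulrC.
by apply: is_derive_eq; rewrite /GRing.scale /= mulrC.
Qed.

Lemma is_derive_quadratic_form n (C : 'I_n -> 'I_n -> R)
    (alpha : 'I_n -> R -> R) (dalpha : 'I_n -> R) (t : R) :
  (forall k l, C k l = C l k) -> (forall k, is_derive t 1 (alpha k) (dalpha k)) ->
  is_derive t (1 : R) (fun r => \sum_k \sum_l alpha k r * alpha l r * C k l)
    (2 * \sum_k \sum_l dalpha k * alpha l t * C k l).
Proof.
move=> C_sym alpha_d.
apply: is_derive_eq.
  by apply: is_derive_sumr => k; apply: is_derive_sumr.
rewrite mulr2n mulrDl mul1r.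
transitivity (\sum_k \sum_l (alpha k t * dalpha l * C k l + dalpha k * alpha l t * C k l)).
  by apply: eq_bigr => k _; apply: eq_bigr => l _; rewrite /= scaler0 add0r /GRing.scale /=; ring.
under eq_bigr do rewrite big_split /=.
rewrite big_split /=; congr (_ + _).
rewrite exchange_big /=; apply: eq_bigr => l _; apply: eq_bigr => k _.
by rewrite C_sym [alpha k t * _]mulrC.
Qed.

End Derivatives.

Section TimeDependentPoly.
Variables (R : realType) (n : nat) (p : R -> {poly R}) (t : R).

Local Notation node := (fun k : nat => k%:R : R).
Local Notation L k := (tnth (@lagrange R n.+1 node) k : {poly R}).

Definition tderiv : {poly R} := \sum_(k < n.+1) 'D_1 (fun r => (p r).[node k]) t *: L k.

Hypothesis size_p : forall r, (size (p r) <= n.+1)%N.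
Hypothesis p_derivable : forall x, derivable (fun r => (p r).[x]) t 1.

Let node_inj : injective node.
Proof. by move=> k m /eqP; rewrite eqr_nat => /eqP. Qed.

Lemma lagrange_expand r : p r = \sum_(k < n.+1) (p r).[node k] *: L k.
Proof.
rewrite {1}(lagrange_gen _ node_inj (size_p r)) //.
by apply: eq_bigr => k _; rewrite mul_polyC.
Qed.

Lemma is_derive_horner_tderiv x : is_derive t (1 : R) (fun r => (p r).[x]) tderiv.[x].
Proof.
have -> : (fun r => (p r).[x]) = (fun r => \sum_(k < n.+1) (p r).[node k] * (L k).[x]).
  apply/funext => r; rewrite {1}lagrange_expand horner_sum.
  by apply: eq_bigr => k _; rewrite hornerZ.
rewrite horner_sum; apply: is_derive_sumr => k; rewrite hornerZ.
by apply: is_derive_mulr_cst; exact/derivableP/p_derivable.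
Qed.

Lemma derive1_horner_tderiv x : derive1 (fun r => (p r).[x]) t = tderiv.[x].
Proof. by have := is_derive_horner_tderiv x => ?; rewrite derive1E derive_val. Qed.

Lemma is_derive_half_pint_sqr a b :
  is_derive t (1 : R) (fun r => pint a b (p r * p r) / 2) (pint a b (tderiv * p t)).
Proof.
pose C k l := pint a b (L k * L l).
have -> : (fun r => pint a b (p r * p r) / 2) =
    (fun r => (\sum_(k < n.+1) \sum_(l < n.+1) (p r).[node k] * (p r).[node l] * C k l) * 2^-1).
  by apply/funext => r; rewrite {1 2}lagrange_expand pint_mul_sumZ.
apply: is_derive_eq.
  apply: is_derive_mulr_cst; apply: is_derive_quadratic_form => [k l|k].
    by rewrite /C mulrC.
  exact/derivableP/p_derivable.
rewrite /tderiv [in RHS]lagrange_expand pint_mul_sumZ.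
by rewrite mulrAC divff ?mul1r ?pnatr_eq0.
Qed.

End TimeDependentPoly.

Lemma size_deriv_le (R : nzRingType) (p : {poly R}) : (size p^`() <= size p)%N.
Proof. exact: leq_trans (size_poly _ _) (leq_pred _). Qed.

Lemma jump_mean_gap_le0 (R : realFieldType) (ul ur wl : R) :
  (ur < ul /\ (ul + ur) / 2 <= wl) \/ (ul < ur /\ wl <= (ul + ur) / 2) ->
  (ur - ul) * (wl - (ul + ur) / 2) <= 0.
Proof.
case=> [[jump mean]|[jump mean]].
- by apply: mulr_le0_ge0; lra.
- by apply: mulr_ge0_le0; lra.
Qed.

(* ul, ua: u^- and u^+ at x_{i-1/2}; ub = u^-_{i+1/2}; wl, wb: w^- at x_{i-1/2}, x_{i+1/2}. *)
Lemma entropy_production_eq (R : fieldType) (lam dE ul ua ub wl wb : R) :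
  dE + lam * wb * ub - lam * wl * ua - lam * ((ub ^+ 2 - ua ^+ 2) / 2) = 0 ->
  dE + (lam * wb * ub - lam * ub ^+ 2 / 2) - (lam * wl * ul - lam * ul ^+ 2 / 2) =
  lam * ((ua - ul) * (wl - (ul + ua) / 2)).
Proof. by move=> scheme; rewrite -[RHS]add0r -scheme; ring. Qed.

Section Cells.
Variables (R : realType) (h : R).

Lemma cint_hornerM j (p q : {poly R}) :
  cint h j (fun x => p.[x] * q.[x]) = pint (xhalf h (j - 1)) (xhalf h j) (p * q).
Proof. by apply: eq_Rintegral => x _; rewrite hornerM. Qed.

Lemma Ecell_pint (u : int -> R -> {poly R}) j r :
  Ecell h u j r = pint (xhalf h (j - 1)) (xhalf h j) (u j r * u j r) / 2.
Proof.
rewrite mulrC -pintZ; apply: eq_Rintegral => x _.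
by rewrite hornerZ hornerM expr2 mulrC.
Qed.

Lemma xhalf_lt j : 0 < h -> xhalf h (j - 1) < xhalf h j.
Proof. by move=> h_gt0; rewrite /xhalf rmorphB /= ltr_pM2r // ltrD2r gtrBl. Qed.

End Cells.

Theorem mainTheorem3 (R : realType) (lam h : R) (N M : nat)
  (u w : int -> R -> {poly R}) (i : int) (t : R)
  (hlam : 0 < lam) (hh : 0 < h) (hNM : (N <= M)%N)
  (* u_h(.,t) in V_h : degree <= N on each cell *)
  (hu_deg : forall (j : int) (s : R), (size (u j s) <= N.+1)%N)
  (* w_h(.,t) : degree <= M on each cell *)
  (hw_deg : forall (j : int) (s : R), (size (w j s) <= M.+1)%N)
  (* u_h differentiable in t *)
  (hu_diff : forall (j : int) (x s : R), derivable (fun r => (u j r).[x]) s 1)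
  (* moment preservation of the reconstruction w_h *)
  (hmom : forall (j : int) (s : R) (phi : {poly R}), (size phi <= N.+1)%N ->
     cint h j (fun x => phi.[x] * (w j s).[x]) =
     cint h j (fun x => phi.[x] * (u j s).[x]))
  (* semi-discrete P_N P_M scheme with upwind flux, on every cell, at all times *)
  (hscheme : forall (j : int) (s : R) (phi : {poly R}), (size phi <= N.+1)%N ->
     cint h j (fun x => derive1 (fun r => (u j r).[x]) s * phi.[x])
     + flux_w lam h w j s * phi.[xhalf h j]
     - flux_w lam h w (j - 1) s * phi.[xhalf h (j - 1)]
     - cint h j (fun x => lam * (w j s).[x] * (deriv phi).[x]) = 0) :
  ((lim_minus h u (i - 1) t > lim_plus h u (i - 1) t /\
    lim_minus h w (i - 1) t >= (lim_minus h u (i - 1) t + lim_plus h u (i - 1) t) / 2)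
   \/
   (lim_minus h u (i - 1) t < lim_plus h u (i - 1) t /\
    lim_minus h w (i - 1) t <= (lim_minus h u (i - 1) t + lim_plus h u (i - 1) t) / 2)) ->
  derive1 (Ecell h u i) t + Ftilde lam h u w i t - Ftilde lam h u w (i - 1) t <= 0.
Proof.
move=> /jump_mean_gap_le0 jump_le0.
set a := xhalf h (i - 1); set b := xhalf h i; set U := u i t.
have u_derivable x : derivable (fun r => (u i r).[x]) t 1 := hu_diff i x t.
have time_term : cint h i (fun x => derive1 (fun r => (u i r).[x]) t * U.[x]) =
    derive1 (Ecell h u i) t.
  have := is_derive_half_pint_sqr (hu_deg i) u_derivable a b => ?.
  rewrite (funext (Ecell_pint h u i)) derive1E derive_val -cint_hornerM.
  by apply: eq_Rintegral => x _; rewrite (derive1_horner_tderiv (hu_deg i) u_derivable).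
(* Only u_h' is tested against w_h. *)
have volume_term : cint h i (fun x => lam * (w i t).[x] * (deriv U).[x]) =
    lam * ((U.[b] ^+ 2 - U.[a] ^+ 2) / 2).
  have size_dU : (size U^`() <= N.+1)%N := leq_trans (size_deriv_le U) (hu_deg i t).
  transitivity (lam * cint h i (fun x => (deriv U).[x] * (w i t).[x])).
    by rewrite cint_hornerM -pintZ; apply: eq_Rintegral => x _; rewrite hornerZ hornerM; ring.
  by rewrite hmom // cint_hornerM pint_derivM_self // xhalf_lt.
have := hscheme i t U (hu_deg i t).
rewrite time_term volume_term /Ftilde /g_prim /flux_w /lim_minus => /entropy_production_eq ->.
by rewrite pmulr_rle0 //; move: jump_le0; rewrite /lim_minus /lim_plus subrK.
Qed.
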